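(* Let $F$ be a field of characteristic $0$, $V$ an $n$-dimensional $F$-vector space, $G\le\mathrm{GL}(V)$ a finite group generated by pseudo-reflections, and $M$ an $r$-dimensional $F[G]$-module. For all $1\le i,j\le r$ there is $L_{ij}\in\mathrm{S}(V)^G$ such that, as operators on $\mathrm{S}(V^* )\otimes\wedge M^*$, \[ d_i^*\delta_j^*+\delta_j^*d_i^*=\partial_{L_{ij}}. \]
   Context: $G$ acts contragrediently on $V^*,M^*$ and diagonally on tensor products of symmetric algebras $\mathrm{S}(\cdot)$ and exterior algebras $\wedge(\cdot)$. $(\mathrm{S}(V)\otimes M^* )^G$ is a free $\mathrm{S}(V)^G$-module with homogeneous basis $\tilde\omega_1^{M^*},\dots,\tilde\omega_r^{M^*}$, and $(\mathrm{S}(V)\otimes M)^G$ is a free $\mathrm{S}(V)^G$-module with homogeneous basis $\tilde\omega_1^{M},\dots,\tilde\omega_r^{M}$. For $s\in\mathrm{S}(V)$, $\partial_s$ is the constant-coefficient differential operator on $\mathrm{S}(V^* )$ ($\partial_v$ for $v\in V$ is the derivation with $\partial_v\lambda=\lambda(v)$ for $\lambda\in V^*$, extended multiplicatively in $s$), acting on $\mathrm{S}(V^* )\otimes\wedge M^*$ as $\partial_s\otimes\mathrm{id}$. For $\mu\in M^*$, $\epsilon_\mu$ is left exterior multiplication on $\wedge M^*$; for $m\in M$, $\iota_m$ is the interior product, the anti-derivation of $\wedge M^*$ with $\iota_m(\xi)=\xi(m)$ for $\xi\in M^*$. If $\tilde\omega_i^{M^*}=\sum_k s_k\otimes\mu_k$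 then $d_i^*=\sum_k\partial_{s_k}\otimes\epsilon_{\mu_k}$; if $\tilde\omega_j^{M}=\sum_k t_k\otimes m_k$ then $\delta_j^*=\sum_k\partial_{t_k}\otimes\iota_{m_k}$. *)

From HB Require Import structures.
From mathcomp Require Import all_boot all_order all_algebra all_fingroup.
From mathcomp Require Import mxrepresentation.
From mathcomp Require Import mpoly.
Set Implicit Arguments. Unset Strict Implicit. Unset Printing Implicit Defensive.
Import GRing.Theory.
Local Open Scope ring_scope.

(* Coordinates: V = 'rV[F]_n with standard basis e_1..e_n; G acts on V
   through a faithful matrix representation rV (v |-> v *m rV g).
   S(V)   = {mpoly F[n]}, variable 'X_i standing for e_i.
   S(V-dual) = {mpoly F[n]}, variable 'X_i standing for the dual coordinate x_i.
   M = 'rV[F]_r with basis e_1..e_r, G acting by m |-> m *m rM g;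
   M-dual = 'rV[F]_r with dual basis, G acting contragrediently by
   xi |-> xi *m (rM g^-1)^T.
   S(V) (x) M and S(V) (x) M-dual are represented by 'rV[{mpoly F[n]}]_r
   (coefficients along the basis of M, resp. the dual basis of M-dual).
   S(V-dual) (x) /\M-dual is represented by functions {set 'I_r} -> {mpoly F[n]}
   (coefficient of e*_S = e*_{s_1} /\ ... /\ e*_{s_k}, s_1 < ... < s_k). *)

Section Defs.
Variables (F : fieldType) (n r : nat).
Local Notation P := {mpoly F[n]}.

Definition mx_act_poly (A : 'M[F]_n) (p : P) : P :=
  p \mPo [tuple \sum_(j < n) A i j *: 'X_j | i < n].

Definition homog_of (d : nat) (p : P) : bool :=
  all [pred m | mdeg m == d] (msupp p).

Definition dop (s : P) (p : P) : P :=
  \sum_(m <- msupp s) s@_m *: mderivm m p.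

Definition ExtT := {set 'I_r} -> P.

Definition ext_sign (T : {set 'I_r}) (k : 'I_r) : P :=
  (-1) ^+ #|[set j in T | (j < k)%N]|.

(* left exterior multiplication by the k-th dual basis vector e*_k *)
Definition eps_k (k : 'I_r) (x : ExtT) : ExtT := fun T =>
  if k \in T then ext_sign T k * x (T :\ k) else 0.

(* interior product by the k-th basis vector e_k of M *)
Definition iota_k (k : 'I_r) (x : ExtT) : ExtT := fun T =>
  if k \in T then 0 else ext_sign T k * x (k |: T).

Definition dop_ext (s : P) (x : ExtT) : ExtT := fun T => dop s (x T).

Definition ext_add (x y : ExtT) : ExtT := fun T => x T + y T.

(* d-dual for omega = sum_k w_k (x) e*_k  :  sum_k partial_{w_k} (x) eps_{e*_k} *)
Definition dstar (w : 'rV[P]_r) (x : ExtT) : ExtT := fun T =>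
  \sum_(k < r) eps_k k (dop_ext (w 0 k) x) T.

(* delta-dual for omega = sum_k w_k (x) e_k : sum_k partial_{w_k} (x) iota_{e_k} *)
Definition deltastar (w : 'rV[P]_r) (x : ExtT) : ExtT := fun T =>
  \sum_(k < r) iota_k k (dop_ext (w 0 k) x) T.

End Defs.

Section Inv.
Variables (F : fieldType) (n r : nat) (gT : finGroupType) (G : {group gT}).
Variables (rV : mx_representation F G n) (rM : mx_representation F G r).
Local Notation P := {mpoly F[n]}.

Definition invariant_poly (p : P) : Prop :=
  forall g, g \in G -> mx_act_poly (rV g) p = p.

Definition act_SM (g : gT) (w : 'rV[P]_r) : 'rV[P]_r :=
  map_mx (mx_act_poly (rV g)) w *m map_mx (fun a => a%:MP) (rM g).

Definition act_SMd (g : gT) (w : 'rV[P]_r) : 'rV[P]_r :=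
  map_mx (mx_act_poly (rV g)) w *m map_mx (fun a => a%:MP) (rM g^-1)%g^T.

Definition invariant_SM (w : 'rV[P]_r) : Prop := forall g, g \in G -> act_SM g w = w.
Definition invariant_SMd (w : 'rV[P]_r) : Prop := forall g, g \in G -> act_SMd g w = w.

Definition homog_inv_basis (inv : 'rV[P]_r -> Prop) (om : 'I_r -> 'rV[P]_r) : Prop :=
  [/\ forall i, inv (om i),
      forall i, exists d, forall k, homog_of d (om i 0 k),
      forall w, inv w -> exists f : 'I_r -> P,
          (forall i, invariant_poly (f i)) /\ w = \sum_(i < r) f i *: om i
    & forall f : 'I_r -> P, (forall i, invariant_poly (f i)) ->
          \sum_(i < r) f i *: om i = 0 -> forall i, f i = 0].

Definition pseudo_reflection (g : gT) : bool := \rank (rV g - 1%:M) == 1%N.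

End Inv.

From HB Require Import structures.
From mathcomp Require Import all_boot all_order all_algebra all_fingroup.
From mathcomp Require Import mxrepresentation.
From mathcomp Require Import ssrcomplements mpoly.
From Stdlib Require Import FunctionalExtensionality.
Set Implicit Arguments. Unset Strict Implicit. Unset Printing Implicit Defensive.
Import GRing.Theory.
Local Open Scope ring_scope.

(* L_ij is the contraction sum_k w_k w'_k of w = omega_i^(M-dual) and
   w' = omega_j^M. On the exterior algebra eps_k iota_l + iota_l eps_k is the
   Kronecker delta, and constant coefficient operators commute with each other
   and with eps_k, iota_l; so in the double sum over (k, l) expanding
   d_i* delta_j* + delta_j* d_i* only the diagonal survives, leaving
   sum_k partial_(w_k) partial_(w'_k) = partial_L. L is invariant as the natural
   pairing of an invariant of S(V) (x) M-dual with one of S(V) (x) M; only the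
   invariance of the two bases is needed, not the other hypotheses. *)

Section ConstantCoefficientOperators.
Variables (F : fieldType) (n : nat).
Local Notation P := {mpoly F[n]}.
Implicit Types (s t p : P).

Lemma dopwE k s p : (msize s <= k)%N ->
  dop s p = \sum_(m : 'X_{1..n < k}) s@_m *: p^`M[m].
Proof.
move=> le_sk; pose I : subFinType _ := 'X_{1..n < k}.
rewrite /dop (big_mksub I) //=; first last.
- by move=> m /msize_mdeg_lt /leq_trans; apply.
- exact: msupp_uniq.
by rewrite big_rmcond //= => m /memN_msupp_eq0 ->; rewrite scale0r.
Qed.

Lemma dop0l p : dop 0 p = 0.
Proof. by rewrite /dop msupp0 big_nil. Qed.

Lemma dopDl s t p : dop (s + t) p = dop s p + dop t p.
Proof.
pose k := maxn (msize s) (msize t).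
have le_sk : (msize s <= k)%N by rewrite leq_maxl.
have le_tk : (msize t <= k)%N by rewrite leq_maxr.
rewrite !(@dopwE k) ?(leq_trans (msizeD_le _ _)) ?geq_max ?le_sk // -big_split.
by apply: eq_bigr => m _; rewrite mcoeffD scalerDl.
Qed.

Lemma dopZl c s p : dop (c *: s) p = c *: dop s p.
Proof.
rewrite !(@dopwE (msize s)) ?msizeZ_le // scaler_sumr.
by apply: eq_bigr => m _; rewrite mcoeffZ scalerA.
Qed.

Lemma dop_suml (I : Type) (js : seq I) (f : I -> P) p :
  dop (\sum_(i <- js) f i) p = \sum_(i <- js) dop (f i) p.
Proof.
by apply: (big_morph (fun s => dop s p)); [move=> s t; apply: dopDl | apply: dop0l].
Qed.

Lemma dopX m p : dop 'X_[m] p = p^`M[m].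
Proof. by rewrite /dop msuppX big_seq1 mcoeffX eqxx scale1r. Qed.

Lemma dop_is_linear s : linear (dop s).
Proof.
move=> c p q; rewrite /dop (scaler_sumr c) -big_split; apply: eq_bigr => m _.
by rewrite mderivmD mderivmZ scalerDr !scalerA mulrC.
Qed.

HB.instance Definition _ s :=
  GRing.isLinear.Build F P P _ (dop s) (dop_is_linear s).

Lemma dopM s t p : dop (s * t) p = dop s (dop t p).
Proof.
rewrite mpolyME dop_suml big_allpairs {2}/dop; apply: eq_bigr => m1 _.
rewrite {2}/dop raddf_sum /= scaler_sumr; apply: eq_bigr => m2 _.
by rewrite dopZl dopX linearZ scalerA addmC mderivmDm.
Qed.

Lemma dopC s t p : dop s (dop t p) = dop t (dop s p).
Proof. by rewrite -!dopM mulrC. Qed.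

Lemma dop_signr s e p : dop s ((-1) ^+ e * p) = (-1) ^+ e * dop s p.
Proof. by rewrite -signr_odd; case: odd; rewrite ?mulN1r ?mul1r ?raddfN. Qed.

End ConstantCoefficientOperators.

Section ExteriorAlgebra.
Variables (F : fieldType) (n r : nat).
Local Notation P := {mpoly F[n]}.
Local Notation ExtT := (ExtT F n r).
Implicit Types (T : {set 'I_r}) (k l : 'I_r) (x : ExtT).

Lemma ext_sign_D1 T k l : k \in T ->
  ext_sign F n T l = (-1) ^+ (k < l)%N * ext_sign F n (T :\ k) l.
Proof.
move=> kT; rewrite /ext_sign -exprD; congr (_ ^+ _).
have -> : [set j in T :\ k | (j < l)%N] = [set j in T | (j < l)%N] :\ k.
  by apply/setP => j; rewrite !inE andbA.
by rewrite [LHS](cardsD1 k) inE kT.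
Qed.

Lemma ext_sign_D1_self T k : ext_sign F n (T :\ k) k = ext_sign F n T k.
Proof.
rewrite /ext_sign; congr (_ ^+ _); apply: eq_card => j; rewrite !inE.
by case: eqVneq => [->|]; rewrite ?ltnn ?andbF.
Qed.

Lemma ext_sign_U1 T k l : l \notin T ->
  ext_sign F n (l |: T) k = (-1) ^+ (l < k)%N * ext_sign F n T k.
Proof. by move=> lT; rewrite (ext_sign_D1 _ (setU11 l T)) setU1K. Qed.

Lemma ext_sign_U1_self T k : ext_sign F n (k |: T) k = ext_sign F n T k.
Proof.
rewrite -ext_sign_D1_self -[RHS]ext_sign_D1_self; congr ext_sign.
by apply/setP => j; rewrite !inE; case: eqVneq.
Qed.

Lemma ext_sign_sqr T k : ext_sign F n T k * ext_sign F n T k = 1.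
Proof. by rewrite -expr2 sqrr_sign. Qed.

Lemma eps_iota_anticomm k l x T :
  eps_k k (iota_k l x) T + iota_k l (eps_k k x) T = if k == l then x T else 0.
Proof.
rewrite /eps_k /iota_k !inE.
have [<-{l}|neq_kl] := eqVneq k l; have [kT|kT] := boolP (k \in T) => /=.
- by rewrite setD1K // ext_sign_D1_self mulrA ext_sign_sqr mul1r addr0.
- by rewrite setU1K // ext_sign_U1_self mulrA ext_sign_sqr mul1r add0r.
- have [lT|lT] := boolP (l \in T); first by rewrite /= mulr0 addr0.
  rewrite ext_sign_U1 // (ext_sign_D1 l kT).
  have -> : (l |: T) :\ k = l |: T :\ k.
    by apply/setP => j; rewrite !inE; case: eqVneq => // ->; rewrite (negPf neq_kl).
  have opp_signs : (-1) ^+ (k < l)%N * (-1) ^+ (l < k)%N = -1 :> P.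
    rewrite -exprD; move: neq_kl; rewrite -val_eqE /=.
    by case: ltngtP => //; rewrite expr1.
  rewrite [X in _ + X]mulrACA [X in _ + X * _]mulrA opp_signs mulN1r mulNr.
  exact: subrr.
- by rewrite mulr0 if_same add0r.
Qed.

Lemma eps_k_sum k (I : Type) (js : seq I) (f : I -> ExtT) T :
  eps_k k (fun U => \sum_(i <- js) f i U) T = \sum_(i <- js) eps_k k (f i) T.
Proof. by rewrite /eps_k; case: ifP => _; [rewrite mulr_sumr | rewrite big1]. Qed.

Lemma iota_k_sum k (I : Type) (js : seq I) (f : I -> ExtT) T :
  iota_k k (fun U => \sum_(i <- js) f i U) T = \sum_(i <- js) iota_k k (f i) T.
Proof. by rewrite /iota_k; case: ifP => _; [rewrite big1 | rewrite mulr_sumr]. Qed.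

Lemma dop_eps_k s k x T : dop s (eps_k k x T) = eps_k k (dop_ext s x) T.
Proof. by rewrite /eps_k; case: ifP => _; rewrite ?dop_signr ?raddf0. Qed.

Lemma dop_iota_k s k x T : dop s (iota_k k x T) = iota_k k (dop_ext s x) T.
Proof. by rewrite /iota_k; case: ifP => _; rewrite ?dop_signr ?raddf0. Qed.

End ExteriorAlgebra.

Section DualOperators.
Variables (F : fieldType) (n r : nat).
Local Notation P := {mpoly F[n]}.
Local Notation ExtT := (ExtT F n r).
Implicit Types (s t : P) (w : 'rV[P]_r) (x : ExtT).

Definition contraction (u v : 'rV[P]_r) : P := \sum_(k < r) u 0 k * v 0 k.

Lemma dop_extC s t x : dop_ext s (dop_ext t x) = dop_ext t (dop_ext s x).
Proof. by apply: functional_extensionality => T; rewrite /dop_ext dopC. Qed.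

Lemma dop_ext_dstar s w x : dop_ext s (dstar w x) = dstar w (dop_ext s x).
Proof.
apply: functional_extensionality => T; rewrite {1}/dop_ext /dstar raddf_sum /=.
by apply: eq_bigr => k _; rewrite dop_eps_k dop_extC.
Qed.

Lemma dop_ext_deltastar s w x : dop_ext s (deltastar w x) = deltastar w (dop_ext s x).
Proof.
apply: functional_extensionality => T; rewrite {1}/dop_ext /deltastar raddf_sum /=.
by apply: eq_bigr => k _; rewrite dop_iota_k dop_extC.
Qed.

Lemma dstar_deltastar_anticomm u v x :
  ext_add (dstar u (deltastar v x)) (deltastar v (dstar u x))
  = dop_ext (contraction u v) x.
Proof.
apply: functional_extensionality => T; rewrite /ext_add.
pose y k l := dop_ext (u 0 k) (dop_ext (v 0 l) x).
have -> : dstar u (deltastar v x) T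
    = \sum_(k < r) \sum_(l < r) eps_k k (iota_k l (y k l)) T.
  rewrite /dstar; apply: eq_bigr => k _.
  by rewrite dop_ext_deltastar /deltastar eps_k_sum; under eq_bigr do rewrite dop_extC.
have -> : deltastar v (dstar u x) T
    = \sum_(k < r) \sum_(l < r) iota_k l (eps_k k (y k l)) T.
  rewrite exchange_big /deltastar; apply: eq_bigr => l _.
  by rewrite dop_ext_dstar /dstar iota_k_sum.
rewrite -big_split /dop_ext /contraction dop_suml; apply: eq_bigr => k _.
rewrite -big_split /=.
under eq_bigr do rewrite eps_iota_anticomm.
by rewrite -big_mkcond (big_pred1 k) ?dopM // => l; rewrite eq_sym.
Qed.

End DualOperators.

Section Invariance.
Variables (F : fieldType) (n r : nat) (gT : finGroupType) (G : {group gT}).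
Variables (rV : mx_representation F G n) (rM : mx_representation F G r).
Local Notation P := {mpoly F[n]}.

Lemma contraction_invariant (u v : 'rV[P]_r) :
  invariant_SMd rV rM u -> invariant_SM rV rM v ->
  invariant_poly rV (contraction u v).
Proof.
move=> inv_u inv_v g Gg.
pose act := comp_mpoly [tuple \sum_(j < n) rV g i j *: ('X_j : P) | i < n].
pose C (A : 'M[F]_r) : 'M[P]_r := map_mx (fun a => a%:MP) A.
have CgV_Cg : C (rM g^-1)%g^T *m (C (rM g))^T = 1%:M.
  rewrite /C map_trmx -(map_mxM (@mpolyC n F)) -trmx_mul.
  by rewrite -repr_mxM ?groupV // mulgV repr_mx1 trmx1 map_mx1.
have act_uv : map_mx act (u *m v^T) = u *m v^T.
  rewrite map_mxM -map_trmx -{2}(inv_u g Gg) -{2}(inv_v g Gg) /act_SMd /act_SM.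
  by rewrite trmx_mul mulmxA -(mulmxA (map_mx _ u)) CgV_Cg mulmx1.
have -> : contraction u v = (u *m v^T) 0 0.
  by rewrite mxE; apply: eq_bigr => k _; rewrite mxE.
by rewrite -[in RHS]act_uv [RHS]mxE.
Qed.

End Invariance.

Theorem lemma5p5 (F : fieldType) (n r : nat) (gT : finGroupType) (G : {group gT})
    (rV : mx_representation F G n) (rM : mx_representation F G r)
    (omMd omM : 'I_r -> 'rV[{mpoly F[n]}]_r) :
  [pchar F] =i pred0 ->
  mx_faithful rV ->
  G :=: <<[set g in G | pseudo_reflection rV g]>>%g ->
  homog_inv_basis rV (invariant_SMd rV rM) omMd ->
  homog_inv_basis rV (invariant_SM rV rM) omM ->
  forall i j : 'I_r, exists L : {mpoly F[n]},
    invariant_poly rV L /\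
    forall x : ExtT F n r,
      ext_add (dstar (omMd i) (deltastar (omM j) x))
              (deltastar (omM j) (dstar (omMd i) x)) = dop_ext L x.
Proof.
move=> _ _ _ [inv_omMd _ _ _] [inv_omM _ _ _] i j.
exists (contraction (omMd i) (omM j)); split.
- exact: contraction_invariant (inv_omMd i) (inv_omM j).
- exact: dstar_deltastar_anticomm.
Qed.
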